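(* The map sending a triple $(r,H,\mathbf S_r)$ with $0\le r\le m$, $H\in\mathcal G(m,r;2)$, $\mathbf S_r\in\mathrm{Sym}(r;2)$ to the row space $$\mathrm{rs}\Big[\ \mathbf I_{m|r}\mathbf P_{\mathcal I}^{T}\ \ \Big|\ \ (\mathbf I_{m|r}\tilde{\mathbf S}_r+\mathbf I_{m|-r})\mathbf P_{\mathcal I}^{-1}\ \Big]\subseteq\mathbb F_2^{2m}$$ (the row space of an $m\times 2m$ binary matrix) is a bijection from the set of such triples onto the set $\mathcal L(2m,m)$ of Lagrangian subspaces of $\mathbb F_2^{2m}$. In particular $|\mathcal L(2m,m)|=\prod_{i=1}^m(2^i+1)=\sum_{r=0}^m 2^{r(r+1)/2}\binom{m}{r}_2$.
   Context: Binary vectors are columns over $\mathbb F_2$; $\mathrm{Sym}(r;2)$ is the set of symmetric binary $r\times r$ matrices and $\mathcal G(m,r;2)$ the set of $r$-dimensional subspaces of $\mathbb F_2^m$; $\binom{m}{r}_2=|\mathcal G(m,r;2)|$. On $\mathbb F_2^{2m}$, viewing elements as pairs $(\mathbf a,\mathbf b)$ with $\mathbf a,\mathbf b\in\mathbb F_2^m$, the symplectic form is $\langle(\mathbf a,\mathbf b),(\mathbf c,\mathbf d)\rangle_s=\mathbf b^T\mathbf c+\mathbf a^T\mathbf d$. A Lagrangian subspace is an $m$-dimensional subspace $L$ with $\langle x,y\rangle_s=0$ for all $x,y\in L$. $\mathbf I_{m|r}$ is the $m\times m$ matrix with $\mathbf I_r$ in the upper-left corner and zeros elsewhere, $\mathbf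 I_{m|-r}=\mathbf I_m-\mathbf I_{m|r}$. Echelon data: for $0\le r\le m$ and $H\in\mathcal G(m,r;2)$, let $\mathbf H_{\mathcal I}$ be the unique $m\times r$ binary matrix in column reduced echelon form with column space $H$: there are indices $i_1<\dots<i_r$, $\mathcal I=\{i_1,\dots,i_r\}$, such that rows $i_1,\dots,i_r$ of $\mathbf H_{\mathcal I}$ form $\mathbf I_r$ and column $j$ of $\mathbf H_{\mathcal I}$ is zero in all rows above row $i_j$. Let $\mathbf I_{\mathcal I}$ (resp. $\mathbf I_{\tilde{\mathcal I}}$) be the $m\times r$ (resp. $m\times(m-r)$) matrix whose columns are the standard basis vectors $\mathbf e_i$ with $i\in\mathcal I$ (resp. $i\notin\mathcal I$), in increasing order of $i$. Put $\mathbf P_{\mathcal I}=[\mathbf H_{\mathcal I}\ \ \mathbf I_{\tilde{\mathcal I}}]\in\mathrm{GL}(m;2)$, and define the $m\times(m-r)$ matrix $\tilde{\mathbf H}_{\mathcal I}$ by $\mathbf P_{\mathcal I}^{-T}=[\mathbf I_{\mathcal I}\ \ \tilde{\mathbf H}_{\mathcal I}]$. (For $r=0$: $H=\{0\}$, $\mathbf P_{\mathcal I}=\mathbf I_m$.) For $\mathbf S_r\in\mathrm{Sym}(r;2)$, $\tilde{\mathbf S}_r\in\mathrm{Sym}(m;2)$ denotes the matrix with $\mathbf S_r$ as its upper-left $r\times r$ block and zeros elsewhere. *)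

(* Binary vectors are represented as ROW vectors of 'F_2
   (mxalgebra works with row spaces); a subspace of F_2^n is represented by
   its canonical square matrix <<A>>%MS, whose row space is the subspace. *)
From HB Require Import structures.
From mathcomp Require Import all_boot all_order all_algebra.
Set Implicit Arguments. Unset Strict Implicit. Unset Printing Implicit Defensive.
Import GRing.Theory.
Local Open Scope ring_scope.

Notation F2 := 'F_2.

Definition is_subspace n (A : 'M[F2]_n) : bool := (<<A>>%MS == A).

Definition grass n r : {set 'M[F2]_n} :=
  [set A | is_subspace A & \rank A == r].

Definition qbinom2 m r : nat := #|grass m r|.

Definition symp m (x y : 'rV[F2]_(m + m)) : F2 :=
  (rsubmx x *m (lsubmx y)^T + lsubmx x *m (rsubmx y)^T) 0 0.

Definition is_lagrangian m (L : 'M[F2]_(m + m)) : bool :=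
  [&& is_subspace L, \rank L == m &
      [forall x : 'rV[F2]_(m + m), forall y : 'rV[F2]_(m + m),
         ((x <= L)%MS && (y <= L)%MS) ==> (symp x y == 0)]].

Definition lagrangians m : {set 'M[F2]_(m + m)} := [set L | is_lagrangian L].

(* column reduced echelon form, with pivot rows f j = i_(j+1) *)
Definition is_cref m r (X : 'M[F2]_(m, r)) : bool :=
  [exists f : {ffun 'I_r -> 'I_m},
    [forall j : 'I_r, forall j' : 'I_r, (j < j')%N ==> (f j < f j')%N] &&
    [forall j : 'I_r,
       [forall j' : 'I_r, X (f j') j == (j == j')%:R] &&
       [forall k : 'I_m, (k < f j)%N ==> (X k j == 0)]]].

(* H_I : the m x r echelon matrix whose column space is the subspace H
   (H given by its row-space representative, so colspace X = H means
    rowspace X^T = H) *)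
Definition HI m r (H : 'M[F2]_m) : 'M[F2]_(m, r) :=
  odflt 0 [pick X : 'M[F2]_(m, r) | is_cref X && (X^T == H)%MS].

Definition lead m r (X : 'M[F2]_(m, r)) (j : 'I_r) : nat :=
  find (fun i : 'I_m => X i j != 0) (enum 'I_m).

Definition pivots m r (X : 'M[F2]_(m, r)) : seq nat :=
  [seq lead X j | j <- enum 'I_r].

Definition nonpivots m r (X : 'M[F2]_(m, r)) : seq nat :=
  [seq i <- iota 0 m | i \notin pivots X].

Definition Itil m r (H : 'M[F2]_m) : 'M[F2]_(m, m - r) :=
  \matrix_(i < m, j < m - r) (val i == nth m (nonpivots (HI r H)) j)%:R.

(* P_I = [H_I  I_{\tilde I}] as an m x m matrix (columns < r from H_I) *)
Definition PI m r (H : 'M[F2]_m) : 'M[F2]_m :=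
  \matrix_(i < m, j < m)
    match @insub nat (fun k => k < r)%N _ (val j) with
    | Some j' => HI r H i j'
    | None => (val i == nth m (nonpivots (HI r H)) (val j - r))%:R
    end.

Definition Stil m r (S : 'M[F2]_r) : 'M[F2]_m :=
  \matrix_(i < m, j < m)
    match @insub nat (fun k => k < r)%N _ (val i),
          @insub nat (fun k => k < r)%N _ (val j) with
    | Some i', Some j' => S i' j'
    | _, _ => 0
    end.

Definition lag_mx m r (H : 'M[F2]_m) (S : 'M[F2]_r) : 'M[F2]_(m, m + m) :=
  row_mx ((pid_mx r : 'M[F2]_m) *m (PI r H)^T)
         (((pid_mx r : 'M[F2]_m) *m Stil m S + copid_mx r) *m invmx (PI r H)).

Definition triple m := {r : 'I_m.+1 & ('M[F2]_m * 'M[F2]_r)%type}.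

Definition valid_triple m (t : triple m) : bool :=
  [&& ((tagged t).1 \in grass m (tag t)) & ((tagged t).2^T == (tagged t).2)].

Definition triples m : {set triple m} := [set t | valid_triple t].

Definition lag_map m (t : triple m) : 'M[F2]_(m + m) :=
  (<< lag_mx (tagged t).1 (tagged t).2 >>)%MS.

From mathcomp Require Import all_boot all_order all_algebra.
From mathcomp Require Import zify.
Import GRing.Theory.
Set Implicit Arguments. Unset Strict Implicit. Unset Printing Implicit Defensive.

Local Open Scope ring_scope.

(* Write J = [[0, 1], [1, 0]], so that <x, y>_s = x J y^T.  Gaussian elimination (insertion of one row at a time into
     a reduced echelon basis) shows that every r-dimensional H has an echelon
     matrix H_I.  Its completion P_I = [H_I  I_~I] is invertible and
     I_{m|r} P_I^T spans H.
   - The generator matrix N(P, S) = [I_{m|r} P^T | (I_{m|r} S~ + I_{m|-r}) P^-1]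
     is studied for an arbitrary invertible P: it has a right inverse (so
     rank m), its Gram matrix N J N^T is S~ + S~^T (so rs N is Lagrangian iff
     S is symmetric), rs N determines S, and every Lagrangian L whose first
     half spans rs(I_{m|r} P^T) equals rs N(P, S) for a symmetric S; this
     last step uses that a Lagrangian is its own symplectic complement.
   - Counting.  Triples are counted by summing #G(m, r; 2) * #Sym(r; 2); the
     Grassmannian is counted through ordered bases, giving a Pascal recursion
     for the Gaussian binomials, whose q-binomial theorem at q = 2 yields the
     product formula. *)

Lemma pchar_F2 : 2 \in [pchar F2].
Proof. exact: pchar_Fp. Qed.

Lemma F2_nonzero (x : F2) : x != 0 -> x = 1.
Proof. by case: x => [[|[|n]] //= Hn] _; apply/val_inj. Qed.

Lemma oppmx_F2 m n (A : 'M[F2]_(m, n)) : - A = A.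
Proof. by apply/matrixP => i j; rewrite mxE (oppr_pchar2 pchar_F2). Qed.

Lemma addmx_F2_self m n (A : 'M[F2]_(m, n)) : A + A = 0.
Proof. by rewrite -{2}(oppmx_F2 A) subrr. Qed.

Definition symJ m : 'M[F2]_(m + m) := block_mx 0 1%:M 1%:M 0.

Lemma symJ_invol m : symJ m *m symJ m = 1%:M.
Proof.
by rewrite mulmx_block !mulmx0 !mul0mx !mulmx1 !addr0 !add0r scalar_mx_block.
Qed.

Lemma symp_symJ m (x y : 'rV[F2]_(m + m)) : symp x y = (x *m symJ m *m y^T) 0 0.
Proof.
rewrite /symp -[x](hsubmxK x) -[y](hsubmxK y) !row_mxKl !row_mxKr.
by rewrite mul_row_block !mulmx0 !mulmx1 !addr0 !add0r tr_row_mx mul_row_col.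
Qed.

Lemma mxrank_symJ m n (A : 'M[F2]_(m + m, n)) : \rank (symJ m *m A) = \rank A.
Proof.
have [unitJ _] := mulmx1_unit (symJ_invol m).
by rewrite eqmxMfull // row_full_unit.
Qed.

Lemma mul_tr_entry p q n (A : 'M[F2]_(p, n)) (B : 'M[F2]_(q, n)) i j :
  (A *m B^T) i j = (row i A *m (row j B)^T) 0 0.
Proof. by rewrite !mxE; apply: eq_bigr => k _; rewrite !mxE. Qed.

Lemma lagrangian_isotropic m (L : 'M[F2]_(m + m)) :
  is_lagrangian L -> L *m symJ m *m L^T = 0.
Proof.
case/and3P => _ _ /forallP isoL; apply/matrixP => i j.
rewrite mul_tr_entry row_mul -symp_symJ mxE.
by move/forallP: (isoL (row i L)) => /(_ (row j L)); rewrite !row_sub => /eqP.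
Qed.

Lemma lagrangian_subE m (L : 'M[F2]_(m + m)) : is_lagrangian L ->
  forall p (v : 'M[F2]_(p, m + m)), (v <= L)%MS = (v *m symJ m *m L^T == 0).
Proof.
move=> lagL p v; have isoL := lagrangian_isotropic lagL.
case/and3P: lagL => _ /eqP rankL _.
set K := kermx (symJ m *m L^T).
have LK : (L <= K)%MS by rewrite sub_kermx mulmxA isoL.
have rankK : \rank K = m by rewrite mxrank_ker mxrank_symJ mxrank_tr rankL addnK.
have /eqmxP KL : (L == K)%MS by rewrite -(mxrank_leqif_eq LK) rankK rankL.
by rewrite KL sub_kermx mulmxA.
Qed.

(** * Existence of reduced echelon bases *)

(* A square matrix in reduced row echelon form, with the pivot of row k in
   column k: only the rows indexed by the pivot set I are nonzero, they form
   the identity on the pivot columns, and row k vanishes before column k. *)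
Definition pivot_basis m (I : {set 'I_m}) (V : 'M[F2]_m) : Prop :=
  [/\ forall k, k \notin I -> row k V = 0,
      forall k k', k \in I -> k' \in I -> V k k' = (k == k')%:R &
      forall k (i : 'I_m), k \in I -> (i < k)%N -> V k i = 0].

Section PivotBasis.
Variables (m : nat) (I : {set 'I_m}) (V : 'M[F2]_m).
Hypothesis basisV : pivot_basis I V.

Lemma reduce_by_pivots (w : 'rV[F2]_m) :
  exists2 u : 'rV[F2]_m, (forall k, k \in I -> u 0 k = 0) & (w - u <= V)%MS.
Proof.
case: basisV => _ idV _.
exists (w - \sum_(k in I) w 0 k *: row k V) => [k' k'I|].
  rewrite !mxE summxE (bigD1 k') //= big1 ?addr0 => [|k /andP[kI nk]].
    by rewrite !mxE idV // eqxx mulr1 subrr.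
  by rewrite !mxE idV // (negPf nk) mulr0.
rewrite opprB addrC subrK; apply: summx_sub => k _.
by rewrite scalemx_sub ?row_sub.
Qed.

Definition insert_pivot (u : 'rV[F2]_m) (p : 'I_m) : 'M[F2]_m :=
  \matrix_(k, i) (if k == p then u 0 i else V k i - V k p * u 0 i).

Variables (u : 'rV[F2]_m) (p : 'I_m).
Hypotheses (u_red : forall k, k \in I -> u 0 k = 0) (u_p : u 0 p = 1)
           (u_lead : forall i : 'I_m, (i < p)%N -> u 0 i = 0).

Let p_notin_I : p \notin I.
Proof. by apply/negP => /u_red; rewrite u_p => /eqP; rewrite oner_eq0. Qed.

Let row_insert_pivot k :
  row k (insert_pivot u p) = if k == p then u else row k V - V k p *: u.
Proof. by apply/rowP => i; rewrite !mxE; case: eqP; rewrite ?mxE. Qed.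

Lemma insert_pivot_basis : pivot_basis (p |: I) (insert_pivot u p).
Proof.
case: basisV => zeroV idV lowV.
have V_out k i : k \notin I -> V k i = 0.
  by move=> kI; move/rowP: (zeroV k kI) => /(_ i); rewrite !mxE.
have in_I k : k \in p |: I -> k != p -> k \in I.
  by rewrite in_setU1 => /orP[/eqP->|//]; rewrite eqxx.
split.
- move=> k; rewrite in_setU1 negb_or => /andP[kp kI].
  by rewrite row_insert_pivot (negPf kp) zeroV // V_out // scale0r subr0.
- move=> k k' kI' k'I'; rewrite mxE.
  have [-> | k'p] := eqVneq k' p.
    by have [_|_] := eqVneq k p; rewrite u_p // mulr1 subrr.
  rewrite u_red ?in_I // mulr0 subr0.
  by have [->|kp] := eqVneq k p; rewrite ?idV ?in_I // eq_sym (negPf k'p).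
- move=> k i kI' ik; rewrite mxE.
  have [kp|kp] := eqVneq k p; first by rewrite u_lead // -kp.
  have kI := in_I k kI' kp.
  rewrite lowV // sub0r; case: (ltngtP p k) => [pk|kp'|/val_inj pk].
  + by rewrite lowV // mul0r oppr0.
  + by rewrite u_lead ?mulr0 ?oppr0 // (ltn_trans ik).
  + by rewrite pk eqxx in kp.
Qed.

Lemma insert_pivot_eqmx : (insert_pivot u p == u + V)%MS.
Proof.
have uV' : (u <= insert_pivot u p)%MS.
  by apply: (eq_row_sub p); rewrite row_insert_pivot eqxx.
have VV' : (V <= insert_pivot u p)%MS.
  apply/row_subP => k; have [kp|kp] := eqVneq k p.
    by case: basisV => zeroV _ _; rewrite kp zeroV ?sub0mx.
  have -> : row k V = row k (insert_pivot u p) + V k p *: u.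
    by rewrite row_insert_pivot (negPf kp) subrK.
  by rewrite addmx_sub ?row_sub // scalemx_sub.
apply/andP; split; last by rewrite addsmx_sub uV' VV'.
apply/row_subP => k; rewrite row_insert_pivot.
case: eqP => _; first exact: addsmxSl.
by rewrite addmx_sub ?eqmx_opp ?scalemx_sub ?addsmxSl // (submx_trans (row_sub k V)) ?addsmxSr.
Qed.

End PivotBasis.

Lemma pivot_basis_add m (I : {set 'I_m}) (V : 'M[F2]_m) (w : 'rV[F2]_m) :
  pivot_basis I V -> exists I' V', pivot_basis I' V' /\ (V' == w + V)%MS.
Proof.
move=> basisV; have [u u_red wuV] := reduce_by_pivots basisV w.
have uwV : (u + V == w + V)%MS.
  apply/andP; split; rewrite addsmx_sub addsmxSr andbT.
    by rewrite -[u](subKr w) addmx_sub ?eqmx_opp ?addsmxSl ?(submx_trans wuV) ?addsmxSr.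
  by rewrite -[w](subrK u) addmx_sub ?addsmxSl ?(submx_trans wuV) ?addsmxSr.
have [u0|/rV0Pn[i0 ui0]] := eqVneq u 0.
  exists I, V; split => //.
  by rewrite addsmxSr addsmx_sub submx_refl andbT -(subr0 w) -u0.
case: (@arg_minnP _ i0 (fun i => u 0 i != 0) val ui0) => p /F2_nonzero up p_min.
have u_lead (i : 'I_m) : (i < p)%N -> u 0 i = 0.
  by move=> ip; apply/eqP; apply: contraLR ip; rewrite -leqNgt => /p_min.
exists (p |: I), (insert_pivot V u p); split; first exact: insert_pivot_basis.
apply/eqmxP; apply: eqmx_trans (eqmxP uwV).
by apply/eqmxP; apply: (insert_pivot_eqmx basisV).
Qed.

(* Inserting the rows of H one by one yields a reduced echelon basis of H. *)
Lemma pivot_basis_exists m (H : 'M[F2]_m) :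
  exists I V, pivot_basis I V /\ (V == H)%MS.
Proof.
have sumH : ((\sum_(i < m) <<row i H>>)%MS == H)%MS.
  apply/andP; split; first by apply/sumsmx_subP => i _; rewrite genmxE row_sub.
  by apply/row_subP => i; rewrite (sumsmx_sup i) // genmxE.
suff [I [V [basisV VH]]] : exists I V, pivot_basis I V /\
    (V == \sum_(i < m) <<row i H>>)%MS.
  by exists I, V; split => //; apply/eqmxP; apply: eqmx_trans (eqmxP sumH); apply/eqmxP.
elim/big_rec: _ => [|i A _ [I [V [basisV /eqmxP VA]]]].
  exists set0, 0; split; last by rewrite /= !sub0mx.
  by split => [k _|k k'|k i]; rewrite ?in_set0 // row0.
have [I' [V' [basisV' V'wV]]] := pivot_basis_add (row i H) basisV.
exists I', V'; split => //; apply/eqmxP; apply: eqmx_trans (eqmxP V'wV) _.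
exact: adds_eqmx (eqmx_sym (genmxE _)) VA.
Qed.

Lemma enum_val_mono m (I : {set 'I_m}) (j j' : 'I_#|I|) :
  (j < j')%N -> (enum_val j < enum_val j')%N.
Proof.
move=> jj'; set x := enum_val j.
have sorted_I : sorted ltn (map val (enum I)).
  rewrite -[enum _](eq_filter (mem_enum _)).
  rewrite -(eq_filter (mem_map val_inj _)) -filter_map.
  by rewrite (sorted_filter ltn_trans) // unlock val_ord_enum iota_ltn_sorted.
have size_I : size (map val (enum I)) = #|I| by rewrite size_map cardE.
rewrite /x !(enum_val_nth x) -!(nth_map x (val x)) ?cardE -?cardE //.
by apply: (sorted_ltn_nth ltn_trans) => //; rewrite inE size_I.
Qed.

Lemma crefP m r (X : 'M[F2]_(m, r)) : is_cref X ->
  exists f : 'I_r -> 'I_m,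
    [/\ forall j j' : 'I_r, (j < j')%N -> (f j < f j')%N,
        forall j j', X (f j') j = (j == j')%:R &
        forall j (k : 'I_m), (k < f j)%N -> X k j = 0].
Proof.
case/existsP => g /andP[/forallP incr /forallP piv].
exists (fun j => g j); split.
- by move=> j j' jj'; move/forallP: (incr j) => /(_ j') /implyP; apply.
- by move=> j j'; case/andP: (piv j) => /forallP /(_ j') /eqP.
- by move=> j k kj; case/andP: (piv j) => _ /forallP /(_ k) /implyP /(_ kj) /eqP.
Qed.

Lemma cref_row_free m r (X : 'M[F2]_(m, r)) : is_cref X -> row_free X^T.
Proof.
case/crefP => f [_ piv _]; apply/row_freeP.
exists (\matrix_(i < m, j < r) (i == f j)%:R); apply/matrixP => j j'.
rewrite !mxE (bigD1 (f j')) //= big1 ?addr0 => [|i /negPf ni]; last by rewrite !mxE ni mulr0.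
by rewrite !mxE eqxx mulr1 piv.
Qed.

Definition pivot_rows m (I : {set 'I_m}) (V : 'M[F2]_m) : 'M[F2]_(m, #|I|) :=
  \matrix_(i, j) V (enum_val j) i.

Lemma pivot_rows_cref m (I : {set 'I_m}) (V : 'M[F2]_m) :
  pivot_basis I V -> is_cref (pivot_rows I V).
Proof.
case=> _ idV lowV; apply/existsP; exists [ffun j => enum_val j]; apply/andP; split.
  apply/forallP => j; apply/forallP => j'; apply/implyP => jj'.
  by rewrite !ffunE enum_val_mono.
apply/forallP => j; apply/andP; split.
  apply/forallP => j'; rewrite !ffunE !mxE idV ?enum_valP //.
  by rewrite (inj_eq enum_val_inj).
by apply/forallP => k; apply/implyP; rewrite ffunE => kj; rewrite mxE lowV ?enum_valP.
Qed.

Lemma pivot_rows_eqmx m (I : {set 'I_m}) (V : 'M[F2]_m) :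
  pivot_basis I V -> ((pivot_rows I V)^T == V)%MS.
Proof.
case=> zeroV _ _; apply/andP; split.
  apply/row_subP => j.
  by apply: (eq_row_sub (enum_val j)); apply/rowP => i; rewrite !mxE.
apply/row_subP => k; have [kI|kI] := boolP (k \in I); last by rewrite zeroV ?sub0mx.
by apply: (eq_row_sub (enum_rank_in kI k)); apply/rowP => i; rewrite !mxE enum_rankK_in.
Qed.

Lemma cref_exists m r (H : 'M[F2]_m) : \rank H = r ->
  exists X : 'M[F2]_(m, r), is_cref X && (X^T == H)%MS.
Proof.
move=> rankH; have [I [V [basisV VH]]] := pivot_basis_exists H.
have crefX := pivot_rows_cref basisV.
have XH : ((pivot_rows I V)^T == H)%MS.
  by apply/eqmxP; apply: eqmx_trans (eqmxP VH); apply/eqmxP/pivot_rows_eqmx.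
have cardI : #|I| = r.
  by rewrite -rankH -(eqmx_rank XH); apply/esym/eqP/cref_row_free.
by case: r / cardI {rankH}; exists (pivot_rows I V); rewrite crefX.
Qed.

Lemma HI_spec m r (H : 'M[F2]_m) : \rank H = r ->
  is_cref (HI r H) && ((HI r H)^T == H)%MS.
Proof.
move=> rankH; rewrite /HI; case: pickP => [X //|noX].
by have [X XH] := cref_exists rankH; rewrite noX in XH.
Qed.

Definition echelon_completion m r (X : 'M[F2]_(m, r)) : 'M[F2]_m :=
  \matrix_(i < m, j < m)
    match @insub nat (fun k => k < r)%N _ (val j) with
    | Some j' => X i j'
    | None => (val i == nth m (nonpivots X) (val j - r))%:R
    end.

Lemma PI_completion m r (H : 'M[F2]_m) : PI r H = echelon_completion (HI r H).
Proof. by []. Qed.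

Section Completion.
Variables (m r : nat) (X : 'M[F2]_(m, r)).

Lemma completion_lt i (j : 'I_m) (j' : 'I_r) :
  val j = val j' -> echelon_completion X i j = X i j'.
Proof.
move=> jj'; rewrite mxE; case: insubP => [k _ kj|]; last by rewrite jj' ltn_ord.
by congr (X i _); apply: val_inj; rewrite kj.
Qed.

Lemma completion_ge i (j : 'I_m) : (r <= j)%N ->
  echelon_completion X i j = (val i == nth m (nonpivots X) (j - r))%:R.
Proof. by move=> rj; rewrite mxE; case: insubP => [k jr _|//]; rewrite ltnNge rj in jr. Qed.

Lemma completion_left (rm : (r <= m)%N) :
  X^T = pid_mx r *m (echelon_completion X)^T.
Proof.
apply/matrixP => j i; rewrite mxE [RHS]mxE (bigD1 (widen_ord rm j)) //= big1 ?addr0.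
  by rewrite [_^T _ _]mxE (completion_lt _ (j' := j)) // mxE eqxx ltn_ord mul1r.
move=> k kj; rewrite [pid_mx _ _ _]mxE; case: eqP => [jk|_]; last by rewrite mul0r.
by case/eqP: kj; apply: val_inj.
Qed.

Variable f : 'I_r -> 'I_m.
Hypotheses (f_incr : forall j j' : 'I_r, (j < j')%N -> (f j < f j')%N)
           (X_piv : forall j j', X (f j') j = (j == j')%:R)
           (X_above : forall j (k : 'I_m), (k < f j)%N -> X k j = 0).

Lemma pivot_map_inj : injective f.
Proof.
move=> j j' fjj'; apply: val_inj; case: (ltngtP j j') => // jj';
  by have := f_incr jj'; rewrite fjj' ltnn.
Qed.

Lemma echelon_dim_le : (r <= m)%N.
Proof. by have := leq_card f pivot_map_inj; rewrite !card_ord. Qed.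

Lemma lead_echelon j : lead X j = f j.
Proof.
rewrite /lead; set nz := (fun i : 'I_m => X i j != 0).
have Xfj : X (f j) j = 1 by rewrite X_piv eqxx.
have has_nz : has nz (enum 'I_m).
  by apply/hasP; exists (f j); rewrite ?mem_enum //= /nz Xfj oner_eq0.
case: (ltngtP (find nz (enum 'I_m)) (f j)) => // [lt|gt].
  have := nth_find (f j) has_nz; rewrite /nz.
  by rewrite X_above ?eqxx // nth_enum_ord // (ltn_trans lt).
by have := before_find (f j) gt; rewrite nth_ord_enum /nz Xfj oner_eq0.
Qed.

Lemma pivots_echelon : pivots X = [seq val (f j) | j <- enum 'I_r].
Proof. by apply: eq_map => j; rewrite lead_echelon. Qed.

Lemma size_nonpivots : size (nonpivots X) = (m - r)%N.
Proof.
have uniq_piv : uniq (pivots X).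
  by rewrite pivots_echelon map_inj_uniq ?enum_uniq // => j j' /val_inj /pivot_map_inj.
have size_piv : size (pivots X) = r by rewrite pivots_echelon size_map size_enum_ord.
have count_piv : count (mem (pivots X)) (iota 0 m) = r.
  rewrite -size_filter -[RHS]size_piv; apply/perm_size/uniq_perm => //.
    by rewrite filter_uniq ?iota_uniq.
  move=> x; rewrite mem_filter /= andb_idr // pivots_echelon => /mapP[j _ ->].
  by rewrite mem_iota /= ltn_ord.
rewrite /nonpivots size_filter.
have := count_predC (mem (pivots X)) (iota 0 m).
by rewrite size_iota count_piv => E; rewrite -[in RHS]E addKn.
Qed.

(* Every standard basis vector lies in the row space of P^T, first the
   non-pivot ones (columns of I_{~I}), then the pivot ones. *)
Lemma delta_nonpivot_sub (i : 'I_m) : val i \notin pivots X ->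
  ((delta_mx 0 i : 'rV[F2]_m) <= (echelon_completion X)^T)%MS.
Proof.
move=> ip; have inp : val i \in nonpivots X by rewrite mem_filter ip mem_iota /= ltn_ord.
set k := index (val i) (nonpivots X).
have km : (r + k < m)%N.
  by have := index_mem (val i) (nonpivots X); rewrite inp size_nonpivots; lia.
apply: (eq_row_sub (Ordinal km)); apply/rowP => i'.
by rewrite mxE [_^T _ _]mxE completion_ge /= ?leq_addr // addKn nth_index // mxE eqxx.
Qed.

(* Column j of P^T is e_(f j) plus non-pivot coordinates. *)
Lemma delta_pivot_sub (j : 'I_r) :
  ((delta_mx 0 (f j) : 'rV[F2]_m) <= (echelon_completion X)^T)%MS.
Proof.
set P := echelon_completion X; set x := row (widen_ord echelon_dim_le j) P^T.
have xk k : x 0 k = X k j by rewrite mxE [_^T _ _]mxE (completion_lt _ (j' := j)).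
set rest := (\sum_(k | k != f j) x 0 k *: delta_mx 0 k : 'rV[F2]_m).
have -> : delta_mx 0 (f j) = x - rest.
  by rewrite {1}(row_sum_delta x) (bigD1 (f j)) //= xk X_piv eqxx scale1r addrK.
rewrite addmx_sub ?row_sub // eqmx_opp summx_sub // => k kfj.
have [kp|kp] := boolP (val k \in pivots X); last by rewrite scalemx_sub ?delta_nonpivot_sub.
move: kp; rewrite pivots_echelon => /mapP[j' _ /val_inj kE]; rewrite kE in kfj *.
by rewrite xk X_piv; case: eqP => [jj'|_]; [rewrite jj' eqxx in kfj | rewrite scale0r sub0mx].
Qed.

Lemma echelon_completion_unit : echelon_completion X \in unitmx.
Proof.
rewrite -unitmx_tr -row_full_unit -sub1mx; apply/row_subP => i; rewrite row1.
have [ip|] := boolP (val i \in pivots X); last exact: delta_nonpivot_sub.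
by move: ip; rewrite pivots_echelon => /mapP[j _ /val_inj ->]; apply: delta_pivot_sub.
Qed.

End Completion.

Lemma PI_unit m r (H : 'M[F2]_m) : \rank H = r -> PI r H \in unitmx.
Proof.
move=> rankH; have /andP[/crefP[f [f_incr X_piv X_above]] _] := HI_spec rankH.
by rewrite PI_completion (echelon_completion_unit f_incr X_piv X_above).
Qed.

Lemma PI_left_eqmx m r (H : 'M[F2]_m) : \rank H = r ->
  ((pid_mx r : 'M[F2]_m) *m (PI r H)^T == H)%MS.
Proof.
move=> rankH; have rm : (r <= m)%N by rewrite -rankH rank_leq_col.
have /andP[_ XH] := HI_spec rankH.
rewrite (completion_left (HI r H) rm) -PI_completion in XH.
apply/eqmxP; apply: eqmx_trans _ (eqmxP XH); apply/eqmxP/andP; split.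
  by rewrite -(@pid_mx_id _ m r m r) // -mulmxA submxMl.
by rewrite -(@pid_mx_id _ r m m r) // -mulmxA submxMl.
Qed.

Lemma pid_mulmxE m n r (A : 'M[F2]_(m, n)) i j :
  (pid_mx r *m A : 'M[F2]_(m, n)) i j = if (i < r)%N then A i j else 0.
Proof.
rewrite mxE (bigD1 i) //= big1 ?addr0 => [|k /negPf ki].
  by rewrite mxE eqxx /=; case: (i < r)%N; rewrite ?mul1r ?mul0r.
by rewrite mxE; case: eqP => [/val_inj ik|_]; [rewrite ik eqxx in ki | rewrite mul0r].
Qed.

Lemma mulmx_pidE m n r (A : 'M[F2]_(m, n)) i j :
  (A *m pid_mx r : 'M[F2]_(m, n)) i j = if (j < r)%N then A i j else 0.
Proof.
rewrite mxE (bigD1 j) //= big1 ?addr0 => [|k /negPf kj].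
  by rewrite mxE eqxx /=; case: (j < r)%N; rewrite ?mulr1 ?mulr0.
by rewrite mxE; case: eqP => [/val_inj jk|_]; [rewrite jk eqxx in kj | rewrite mulr0].
Qed.

Section Corner.
Variables (m r : nat) (S : 'M[F2]_r).

Lemma Stil_lt (i j : 'I_m) (i' j' : 'I_r) :
  val i = val i' -> val j = val j' -> Stil m S i j = S i' j'.
Proof.
move=> ii' jj'; rewrite mxE; case: insubP => [u _ ui|]; last by rewrite ii' ltn_ord.
case: insubP => [v _ vj|]; last by rewrite jj' ltn_ord.
by congr (S _ _); apply: val_inj; rewrite ?ui ?vj.
Qed.

Lemma Stil_ge (i j : 'I_m) : ~~ (i < r)%N || ~~ (j < r)%N -> Stil m S i j = 0.
Proof. by rewrite mxE; case: insubP => [u -> _|//]; case: insubP => [v -> _|//]. Qed.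

Lemma pid_Stil : pid_mx r *m Stil m S = Stil m S.
Proof.
by apply/matrixP => i j; rewrite pid_mulmxE; case: ifP => // ir; rewrite Stil_ge ?ir.
Qed.

Lemma Stil_pid : Stil m S *m pid_mx r = Stil m S.
Proof.
by apply/matrixP => i j; rewrite mulmx_pidE; case: ifP => // jr; rewrite Stil_ge ?jr ?orbT.
Qed.

Lemma Stil_copid : Stil m S *m copid_mx r = 0.
Proof. by rewrite mulmxBr mulmx1 Stil_pid subrr. Qed.

Lemma tr_Stil : (Stil m S)^T = Stil m S^T.
Proof.
apply/matrixP => i j; rewrite !mxE.
by case: (insub (val i)) => [i'|]; case: (insub (val j)) => [j'|]; rewrite ?mxE.
Qed.

End Corner.

Lemma Stil_inj m r (S1 S2 : 'M[F2]_r) : (r <= m)%N -> Stil m S1 = Stil m S2 -> S1 = S2.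
Proof.
move=> rm /matrixP E; apply/matrixP => i j.
by have := E (widen_ord rm i) (widen_ord rm j); rewrite !(Stil_lt _ (i' := i) (j' := j)).
Qed.

Lemma corner_block m r (T : 'M[F2]_m) (rm : (r <= m)%N) :
  pid_mx r *m T = T ->
  Stil m (\matrix_(i < r, j < r) T (widen_ord rm i) (widen_ord rm j)) = T *m pid_mx r.
Proof.
move=> suppT; apply/matrixP => i j; rewrite mulmx_pidE.
case: (ltnP i r) => ir; case: (ltnP j r) => jr.
- by rewrite (Stil_lt _ (i' := Ordinal ir) (j' := Ordinal jr)) // mxE;
    congr (T _ _); apply: val_inj.
- by rewrite Stil_ge // -!leqNgt jr orbT.
- by rewrite Stil_ge -?leqNgt ?ir // -suppT pid_mulmxE ltnNge ir.
- by rewrite Stil_ge // -!leqNgt ir.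
Qed.

(** * The generator matrix for an arbitrary invertible P *)

Definition lag_gen m r (P : 'M[F2]_m) (S : 'M[F2]_r) : 'M[F2]_(m, m + m) :=
  row_mx ((pid_mx r : 'M[F2]_m) *m P^T)
         (((pid_mx r : 'M[F2]_m) *m Stil m S + copid_mx r) *m invmx P).

Lemma lag_mx_gen m r (H : 'M[F2]_m) (S : 'M[F2]_r) : lag_mx H S = lag_gen (PI r H) S.
Proof. by []. Qed.

Section Generator.
Variables (m r : nat) (P : 'M[F2]_m).
Hypotheses (rm : (r <= m)%N) (unitP : P \in unitmx).

Lemma lag_gen_rinv (S : 'M[F2]_r) :
  lag_gen P S *m col_mx (invmx P)^T (P *m copid_mx r) = 1%:M.
Proof.
rewrite mul_row_col -mulmxA -trmx_mul mulVmx // trmx1 mulmx1.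
rewrite -mulmxA (mulmxA (invmx P)) mulVmx // mul1mx mulmxDl -mulmxA Stil_copid.
by rewrite mulmx0 add0r copid_mx_id // addrC subrK.
Qed.

Lemma lag_gen_rank (S : 'M[F2]_r) : \rank (lag_gen P S) = m.
Proof.
apply/eqP; rewrite eqn_leq rank_leq_row /= -{1}(mxrank1 F2 m).
by rewrite -(lag_gen_rinv S) mxrankM_maxl.
Qed.

Lemma lag_gen_gram (S : 'M[F2]_r) :
  lag_gen P S *m symJ m *m (lag_gen P S)^T = Stil m S + (Stil m S)^T.
Proof.
have cross : ((pid_mx r : 'M[F2]_m) *m Stil m S + copid_mx r) *m invmx P
               *m ((pid_mx r : 'M[F2]_m) *m P^T)^T = Stil m S.
  rewrite trmx_mul trmxK tr_pid_mx -mulmxA (mulmxA (invmx P)) mulVmx // mul1mx.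
  by rewrite mulmxDl mul_copid_mx_pid // addr0 pid_Stil Stil_pid.
rewrite mul_row_block !mulmx0 !mulmx1 !addr0 !add0r tr_row_mx mul_row_col.
by rewrite cross; congr (_ + _); rewrite -[in RHS]cross [in RHS]trmx_mul trmxK.
Qed.

Lemma lag_gen_lagrangian (S : 'M[F2]_r) :
  S^T = S -> is_lagrangian (<< lag_gen P S >>)%MS.
Proof.
move=> symS; apply/and3P; split; first by rewrite /is_subspace genmx_id.
  by rewrite mxrank_gen lag_gen_rank.
apply/forallP => x; apply/forallP => y; apply/implyP => /andP[].
rewrite !genmxE => /submxP[u ->] /submxP[v ->].
rewrite symp_symJ trmx_mul !mulmxA -(mulmxA u) -(mulmxA _ _ (lag_gen P S)^T).
by rewrite lag_gen_gram tr_Stil symS addmx_F2_self mulmx0 mul0mx mxE.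
Qed.

Lemma lag_gen_eqmx_inj (S1 S2 : 'M[F2]_r) :
  (lag_gen P S1 == lag_gen P S2)%MS -> S1 = S2.
Proof.
case/andP=> /submxP[D E] _.
have D1 : D = 1%:M by rewrite -(lag_gen_rinv S1) E -mulmxA lag_gen_rinv mulmx1.
move: E; rewrite D1 mul1mx => /eq_row_mx[_ /(congr1 (mulmx^~ P))].
by rewrite !mulmxKV // => /addIr; rewrite !pid_Stil => /(Stil_inj rm).
Qed.

(* If the first half of a Lagrangian L spans rs(I_{m|r} P^T), then L contains
   the rows [0 | I_{m|-r} P^{-1}]: they are orthogonal to all of L. *)
Lemma complement_sub_lagrangian (L : 'M[F2]_(m + m)) : is_lagrangian L ->
  ((pid_mx r : 'M[F2]_m) *m P^T == lsubmx L)%MS ->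
  (row_mx 0 (copid_mx r *m invmx P) <= L)%MS.
Proof.
move=> lagL /andP[_ /submxP[E LE]]; rewrite (lagrangian_subE lagL).
rewrite -[L in _ *m L^T]hsubmxK mul_row_block !mulmx0 !mulmx1 !addr0 !add0r.
rewrite tr_row_mx mul_row_col mul0mx addr0 LE !trmx_mul trmxK tr_pid_mx.
by rewrite !mulmxA -(mulmxA _ (invmx P)) mulVmx // mulmx1 mul_copid_mx_pid // mul0mx.
Qed.

Lemma lag_gen_surj (L : 'M[F2]_(m + m)) : is_lagrangian L ->
  ((pid_mx r : 'M[F2]_m) *m P^T == lsubmx L)%MS ->
  exists2 S : 'M[F2]_r, S^T = S & (lag_gen P S == L)%MS.
Proof.
move=> lagL leftL; have /andP[/submxP[Y0 PY0] _] := leftL.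
set A := lsubmx L; set B := rsubmx L; set C := copid_mx r *m invmx P.
pose Y := (pid_mx r : 'M[F2]_m) *m Y0.
have YA : Y *m A = pid_mx r *m P^T by rewrite -mulmxA -PY0 mulmxA pid_mx_id.
pose T := Y *m B *m P.
have suppT : pid_mx r *m T = T by rewrite !mulmxA pid_mx_id.
set S := \matrix_(i < r, j < r) T (widen_ord rm i) (widen_ord rm j).
have ST : Stil m S = T *m pid_mx r by apply: corner_block.
(* The generator matrix combines rows of L and rows [0 | C] of L. *)
have genE : lag_gen P S = Y *m L + (1%:M - T) *m row_mx 0 C.
  rewrite -[L in Y *m L]hsubmxK mul_mx_row mul_mx_row mulmx0 add_row_mx addr0 YA.
  have YB : Y *m B = T *m invmx P by rewrite /T mulmxK.
  congr row_mx; rewrite pid_Stil ST YB /C mulmxA -mulmxDl; congr (_ *m _).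
  rewrite mulmxBl mul1mx [T *m copid_mx r]mulmxBr mulmx1.
  by rewrite opprB [RHS]addrCA (subrKC T) addrC.
have genL : (lag_gen P S <= L)%MS.
  rewrite genE addmx_sub ?submxMl //.
  exact: submx_trans (submxMl _ _) (complement_sub_lagrangian lagL leftL).
exists S.
  (* rs N lies in the isotropic L, so its Gram matrix S~ + S~^T vanishes. *)
  have [D ND] := submxP genL.
  have : Stil m S + (Stil m S)^T = 0.
    rewrite -lag_gen_gram ND trmx_mul !mulmxA -(mulmxA D) -(mulmxA _ _ L^T).
    by rewrite lagrangian_isotropic // mulmx0 mul0mx.
  by move/eqP; rewrite addr_eq0 oppmx_F2 tr_Stil => /eqP/(Stil_inj rm).
case/and3P: lagL => _ /eqP rankL _.
by rewrite -(mxrank_leqif_eq genL) lag_gen_rank rankL.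
Qed.

End Generator.

(** * The map (r, H, S_r) |-> rs(...) is a bijection onto L(2m, m) *)

Lemma lsub_submx p q n1 n2 (A : 'M[F2]_(p, n1 + n2)) (B : 'M[F2]_(q, n1 + n2)) :
  (A <= B)%MS -> (lsubmx A <= lsubmx B)%MS.
Proof. by case/submxP => D ->; rewrite -mulmx_lsub submxMl. Qed.

Lemma lag_map_in m (t : triple m) : t \in triples m -> lag_map t \in lagrangians m.
Proof.
case: t => r [H S]; rewrite !inE /valid_triple /= inE.
case/andP=> /andP[_ /eqP rankH] /eqP symS.
rewrite /lag_map /= lag_mx_gen lag_gen_lagrangian ?PI_unit //.
by rewrite -rankH rank_leq_col.
Qed.

(* Injectivity: the left half of the image spans H, which fixes H and r;
   for fixed P_I the row space fixes S_r. *)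
Lemma lag_map_inj m : {in triples m &, injective (@lag_map m)}.
Proof.
move=> [r1 [H1 S1]] [r2 [H2 S2]]; rewrite !inE /valid_triple /= !inE.
case/andP=> /andP[/eqP subH1 /eqP rankH1] _ /andP[/andP[/eqP subH2 /eqP rankH2] _].
rewrite /lag_map /= !lag_mx_gen => /genmxP eqN.
have eqH : H1 = H2.
  rewrite -subH1 -subH2; apply/genmxP/eqmxP.
  apply: eqmx_trans (eqmx_sym (eqmxP (PI_left_eqmx rankH1))) _.
  apply: eqmx_trans _ (eqmxP (PI_left_eqmx rankH2)); apply/eqmxP.
  by case/andP: eqN => /lsub_submx + /lsub_submx; rewrite /lag_gen !row_mxKl => -> ->.
subst H2; have eqr : r1 = r2 by apply: val_inj; rewrite /= -rankH1 -rankH2.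
subst r2; have rm : (r1 <= m)%N by rewrite -rankH1 rank_leq_col.
by rewrite (lag_gen_eqmx_inj rm (PI_unit rankH1) eqN).
Qed.

(* Surjectivity: H is the span of the left half of L. *)
Lemma lag_map_onto m : [set lag_map t | t in triples m] = lagrangians m.
Proof.
apply/setP => L; apply/imsetP/idP => [[t tT ->]|]; first exact: lag_map_in.
rewrite inE => lagL; set H := <<lsubmx L>>%MS.
pose r := Ordinal (rank_leq_col (lsubmx L) : (\rank (lsubmx L) < m.+1)%N).
have rankH : \rank H = r by rewrite mxrank_gen.
have rm : (r <= m)%N by rewrite -rankH rank_leq_col.
have leftL : ((pid_mx r : 'M[F2]_m) *m (PI r H)^T == lsubmx L)%MS.
  by apply/eqmxP; apply: eqmx_trans (eqmxP (PI_left_eqmx rankH)) (genmxE _).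
have [S symS genL] := lag_gen_surj rm (PI_unit rankH) lagL leftL.
exists (Tagged (fun r : 'I_m.+1 => ('M[F2]_m * 'M[F2]_r)%type) (H, S)).
  by rewrite !inE /valid_triple /= inE /is_subspace genmx_id rankH symS !eqxx.
case/and3P: lagL => /eqP subL _ _.
by rewrite /lag_map /= lag_mx_gen -{1}subL; apply/esym/genmxP.
Qed.

(* Positions (i, j) with j <= i of an r x r matrix. *)
Definition lower_pos r := {i : 'I_r & 'I_i.+1}.

Definition lower_col r (p : lower_pos r) : 'I_r :=
  widen_ord (ltn_ord (tag p)) (tagged p).

Definition lower_at r (i : 'I_r) (j : nat) : lower_pos r :=
  existT (fun k : 'I_r => 'I_k.+1) i (inord j).

Lemma card_lower_pos r : #|{: lower_pos r}| = (r * (r + 1) %/ 2)%N.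
Proof.
rewrite card_tagged sumnE big_map big_enum /=.
under eq_bigr => i _ do rewrite card_ord.
have -> : (\sum_(i < r) i.+1 = \sum_(i < r.+1) i)%N by rewrite big_ord_recl.
by rewrite -(big_mkord xpredT (fun i => i)) bin2_sum bin2 /= -divn2 mulnC addn1.
Qed.

(* A symmetric matrix is determined by its lower triangle, which is arbitrary. *)
Definition sym_lower r (S : 'M[F2]_r) : {ffun lower_pos r -> F2} :=
  [ffun p => S (tag p) (lower_col p)].

Definition sym_of_lower r (g : {ffun lower_pos r -> F2}) : 'M[F2]_r :=
  \matrix_(i, j) if (j <= i)%N then g (lower_at i j) else g (lower_at j i).

Lemma card_sym r : #|[set S : 'M[F2]_r | S^T == S]| = (2 ^ (r * (r + 1) %/ 2))%N.
Proof.
have lowerK : {in [set S : 'M[F2]_r | S^T == S], cancel (@sym_lower r) (@sym_of_lower r)}.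
  move=> S; rewrite inE => /eqP symS; apply/matrixP => i j; rewrite !mxE.
  case: leqP => [ji|/ltnW ij]; rewrite ffunE; last rewrite -[in RHS]symS mxE.
    by congr (S _ _); apply: val_inj; rewrite /= inordK.
  by congr (S _ _); apply: val_inj; rewrite /= inordK.
rewrite -(card_in_imset (can_in_inj lowerK)).
have -> : [set sym_lower S | S in [set S : 'M[F2]_r | S^T == S]] = setT.
  apply/setP => g; rewrite inE; apply/imsetP; exists (sym_of_lower g).
    rewrite inE; apply/eqP/matrixP => i j; rewrite !mxE.
    by case: (ltngtP i j) => [ij|ij|/val_inj->]; rewrite ?leqnn // leqNgt ij ?(ltnW ij).
  apply/ffunP => -[i k]; rewrite !ffunE mxE /= -ltnS ltn_ord.
  by congr (g _); congr (Tagged _ _); apply: val_inj; rewrite /= inordK.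
by rewrite cardsT card_ffun card_Fp // card_lower_pos.
Qed.

Local Close Scope ring_scope.

Lemma card_triples m : #|triples m| =
  \sum_(r < m.+1) #|grass m r| * #|[set S : 'M[F2]_r | (S^T == S)%R]|.
Proof.
pose valid (r : 'I_m.+1) (p : 'M[F2]_m * 'M[F2]_r) :=
  (p.1 \in grass m r) && (p.2^T == p.2)%R.
rewrite -sum1_card.
rewrite (eq_bigl (fun t : triple m => xpredT (tag t) && valid (tag t) (tagged t)));
  last by move=> t; rewrite inE.
rewrite -(sig_big_dep xpredT valid (fun _ _ => 1)) /=; apply: eq_bigr => r _.
rewrite -(pair_big (mem (grass m r)) (fun S : 'M[F2]_r => (S^T == S)%R) (fun _ _ => 1)) /=.
rewrite -sum_nat_const; apply: eq_bigr => H _.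
by rewrite -sum1_card; apply: eq_bigl => S; rewrite inE.
Qed.

(** * Counting full-rank matrices and subspaces *)

Definition full_rank r m : {set 'M[F2]_(r, m)} := [set A | \rank A == r].

Section AddRow.
Variables (r m : nat) (v : 'rV[F2]_m) (A : 'M[F2]_(r, m)).

Lemma rank_col_mx_le : \rank (col_mx v A) <= 1 + \rank A.
Proof.
by rewrite -addsmxE (leq_trans (mxrank_adds_leqif v A)) // leq_add2r rank_leq_row.
Qed.

Lemma full_rank_col_mx :
  \rank A = r -> (\rank (col_mx v A) == 1 + r) = ~~ (v <= A)%MS.
Proof.
move=> rankA; have le1 : \rank (v + A)%MS <= 1 + r.
  by rewrite addsmxE; apply: leq_trans rank_col_mx_le _; rewrite rankA.
have [le_rank] := mxrank_leqif_sup (addsmxSr v A).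
rewrite addsmx_sub submx_refl andbT rankA => eq_rank; rewrite rankA in le_rank.
rewrite -addsmxE; apply/eqP/idP => [rank_vA|vA].
  by rewrite -eq_rank rank_vA -{1}[r]add0n eqn_add2r.
by apply/eqP; rewrite eqn_leq le1 add1n ltn_neqAle eq_rank (negPf vA) le_rank.
Qed.

End AddRow.

Lemma card_outside_rowspace r m (A : 'M[F2]_(r, m)) : \rank A = r ->
  #|[set v : 'rV[F2]_m | ~~ (v <= A)%MS]| = 2 ^ m - 2 ^ r.
Proof.
move=> rankA; have [B AB1] := row_freeP (introT eqP rankA : row_free A).
have -> : [set v : 'rV[F2]_m | ~~ (v <= A)%MS] = ~: [set (u *m A)%R | u in 'rV[F2]_r].
  by apply/setP => v; rewrite !inE; congr (~~ _); apply/submxP/imsetP => -[u]; exists u.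
rewrite cardsCs setCK card_imset ?card_mx ?card_Fp ?mul1n //.
by apply: can_inj (mulmx^~ B) _ => u; rewrite -mulmxA AB1 mulmx1.
Qed.

(* A full-rank (1 + r) x m matrix is a full-rank r x m matrix with a row
   outside its row space stacked on top. *)
Lemma card_full_rank_step r m :
  #|full_rank (1 + r) m| = #|full_rank r m| * (2 ^ m - 2 ^ r).
Proof.
rewrite -sum_nat_const -sum1_card (partition_big dsubmx (mem (full_rank r m))) /=.
  apply: eq_bigr => A; rewrite inE => /eqP rankA.
  rewrite -(card_outside_rowspace rankA) -sum1_card (reindex (col_mx^~ A)) /=.
    by apply: eq_bigl => v; rewrite !inE col_mxKd eqxx andbT full_rank_col_mx.
  exists usubmx => [v _|B /andP[_ /eqP <-]]; first by rewrite col_mxKu.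
  by rewrite vsubmxK.
move=> B; rewrite !inE -{1}(vsubmxK B) => /eqP rankB.
rewrite eqn_leq rank_leq_row -(leq_add2l 1) -rankB.
exact: rank_col_mx_le.
Qed.

(* Number of ordered bases of an m-dimensional space of length k. *)
Definition nbases k m := \prod_(i < k) (2 ^ m - 2 ^ i).

Lemma card_full_rank r m : #|full_rank r m| = nbases r m.
Proof.
elim: r => [|r IH]; last by rewrite card_full_rank_step IH /nbases big_ord_recr.
rewrite /nbases big_ord0 (@eq_card1 _ (0 : 'M[F2]_(0, m))%R) // => A.
by rewrite [A]flatmx0 !inE mxrank0 !eqxx.
Qed.

(* Each r-dimensional subspace has #|full_rank r r| ordered bases. *)
Lemma card_grass_full_rank m r : #|grass m r| * #|full_rank r r| = #|full_rank r m|.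
Proof.
rewrite -sum_nat_const -[RHS]sum1_card.
rewrite (partition_big (fun A : 'M[F2]_(r, m) => <<A>>%MS) (mem (grass m r))) /=;
  last first.
  move=> A; rewrite !inE => /eqP rankA.
  by rewrite /is_subspace genmx_id mxrank_gen rankA !eqxx.
apply: eq_bigr => H; rewrite inE => /andP[/eqP subH /eqP rankH].
have [B freeB BH] : exists2 B : 'M[F2]_(r, m), row_free B & (B :=: H)%MS.
  by rewrite -rankH; exists (row_base H); [exact: row_base_free | exact: eq_row_base].
rewrite (reindex (fun g : 'M[F2]_r => (g *m B)%R)) /=; last first.
  exists (fun A => (A *m pinvmx B)%R) => [g _ | A]; first by rewrite mulmxKp.
  by rewrite inE => /andP[_ /eqP AH]; apply: mulmxKpV; rewrite BH -AH genmxE.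
rewrite -sum1_card; apply: eq_bigl => g; rewrite !inE mxrankMfree //.
case: eqP => //= rank_g; symmetry; apply/eqP; rewrite -subH; apply/genmxP.
have gH : ((g *m B)%R <= H)%MS by rewrite -BH submxMl.
apply/andP; split => //.
by rewrite -(mxrank_leqif_sup gH) mxrankMfree // rank_g rankH.
Qed.

(** * The Gaussian binomial coefficients at q = 2 *)

(* Pascal-type recursion for (m choose k)_2. *)
Fixpoint qbin m k : nat :=
  match m, k with
  | _, 0 => 1
  | m'.+1, k'.+1 => qbin m' k'.+1 + 2 ^ (m' - k') * qbin m' k'
  | 0, _.+1 => 0
  end.

Lemma qbin_gt m k : m < k -> qbin m k = 0.
Proof. by elim: m k => [|m IH] [|k] //= mk; rewrite !IH // ?muln0 // ltnW. Qed.

Lemma nbases_gt k m : m < k -> nbases k m = 0.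
Proof. by move=> mk; rewrite /nbases (bigD1 (Ordinal mk)) //= subnn mul0n. Qed.

Lemma nbasesS k m : nbases k.+1 m = nbases k m * (2 ^ m - 2 ^ k).
Proof. by rewrite /nbases big_ord_recr. Qed.

(* Choosing the first basis vector separately. *)
Lemma nbasesSS k m : nbases k.+1 m.+1 = 2 ^ k * (2 ^ m.+1 - 1) * nbases k m.
Proof.
rewrite /nbases big_ord_recl /= expn0.
under eq_bigr => i _ do rewrite /bump /= add1n !expnS -mulnBr.
by rewrite big_split /= prod_nat_const card_ord mulnA (mulnC (2 ^ m.+1 - 1)).
Qed.

(* (m choose k)_2 counts k-dimensional subspaces: it is the number of ordered
   bases of length k in F_2^m divided by the size of GL_k(F_2). *)
Lemma qbin_nbases m k : qbin m k * nbases k k = nbases k m.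
Proof.
elim: m k => [|m IH] [|k].
- by rewrite /nbases !big_ord0.
- by rewrite /= mul0n nbases_gt.
- by rewrite /nbases !big_ord0.
have E1 : qbin m k.+1 * nbases k.+1 k.+1 = nbases k m * (2 ^ m - 2 ^ k).
  by rewrite IH nbasesS.
have E2 : qbin m k * nbases k.+1 k.+1 = 2 ^ k * (2 ^ k.+1 - 1) * nbases k m.
  by rewrite nbasesSS mulnCA IH.
rewrite /= mulnDl E1 -mulnA E2 nbasesSS.
have [km|mk] := leqP k m; last by rewrite nbases_gt // !muln0.
rewrite !mulnA -expnD subnK // (mulnC (nbases k m)) -mulnDl; congr (_ * _).
have pos : 1 <= 2 ^ k by rewrite expn_gt0.
have le_km : 2 ^ k <= 2 ^ m by rewrite leq_exp2l.
rewrite !expnS; nia.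
Qed.

Lemma qbinom2_qbin m r : qbinom2 m r = qbin m r.
Proof.
have pos : 0 < nbases r r by rewrite prodn_gt0 // => i; rewrite subn_gt0 ltn_exp2l.
apply/eqP; rewrite -(eqn_pmul2r pos) qbin_nbases /qbinom2 -!card_full_rank.
by rewrite card_grass_full_rank.
Qed.

(* The q-binomial theorem at q = 2 and x = 1. *)
Lemma qbin_sum m : \sum_(r < m.+1) 2 ^ (r * (r + 1) %/ 2) * qbin m r =
                   \prod_(1 <= i < m.+1) (2 ^ i + 1).
Proof.
have tri k : k.+1 * (k.+1 + 1) %/ 2 = k * (k + 1) %/ 2 + k.+1.
  by rewrite (_ : k.+1 * (k.+1 + 1) = k.+1 * 2 + k * (k + 1)) ?divnMDl 1?addnC //; nia.
elim: m => [|m IH]; first by rewrite big_ord1 big_geq.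
rewrite big_nat_recr //= -IH; set T := \sum_(r < m.+1) _.
(* T with its vanishing term r = m + 1 added, and with its term r = 0 split off *)
have T_ext : \sum_(r < m.+2) 2 ^ (r * (r + 1) %/ 2) * qbin m r = T.
  by rewrite big_ord_recr /= qbin_gt // muln0 addn0.
have T_shift : T = 1 + \sum_(k < m.+1) 2 ^ (k.+1 * (k.+1 + 1) %/ 2) * qbin m k.+1.
  by rewrite -T_ext big_ord_recl; case: (m).
(* by the recursion for qbin (m + 1) r, the left-hand side is T + 2^(m+1) T *)
rewrite big_ord_recl /= (eq_bigr (fun k : 'I_m.+1 =>
    2 ^ (k.+1 * (k.+1 + 1) %/ 2) * qbin m k.+1
    + 2 ^ m.+1 * (2 ^ (k * (k + 1) %/ 2) * qbin m k))) => [|k _]; last first.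
  rewrite /bump /= add1n mulnDr; congr (_ + _).
  rewrite !mulnA -!expnD tri; congr (2 ^ _ * _).
  by have := ltn_ord k; set t := _ %/ 2; lia.
rewrite big_split /= -big_distrr /= -/T addnA [2 ^ _ * 1]/= -T_shift.
by rewrite mulnDr muln1 addnC mulnC.
Qed.

Local Open Scope ring_scope.

Theorem mainTheorem2 (m : nat) :
  {in triples m &, injective (@lag_map m)} /\
  [set lag_map t | t in triples m] = lagrangians m /\
  (#|lagrangians m| = \prod_(1 <= i < m.+1) (2 ^ i + 1))%N /\
  (#|lagrangians m| = \sum_(0 <= r < m.+1) 2 ^ (r * (r + 1) %/ 2) * qbinom2 m r)%N.
Proof.
have card_lag : #|lagrangians m| =
    (\sum_(r < m.+1) 2 ^ (r * (r + 1) %/ 2) * qbinom2 m r)%N.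
  rewrite -lag_map_onto card_in_imset; last exact: lag_map_inj.
  by rewrite card_triples; apply: eq_bigr => r _; rewrite card_sym mulnC.
split; first exact: lag_map_inj.
split; first exact: lag_map_onto.
split; last by rewrite card_lag big_mkord.
by rewrite card_lag -qbin_sum; apply: eq_bigr => r _; rewrite qbinom2_qbin.
Qed.
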